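(* Let $n>2k-t$, $q\geq 3$ and $k>2t+2$. Then \[\theta_{k+1}-\theta_{k-t}+\left[{n-t\atop k-t}\right]_q-q^{(k-t+1)(k-t)}\left[{n-k-1\atop k-t}\right]_q>\left[{n-t-2\atop k-t-2}\right]_q\left(1+\theta_{t+2}q^{k-t-1}\frac{q^{n-k}-1}{q^{k-t-1}-1}\right),\] i.e. the set of all $k$-spaces of $\mathrm{PG}(n,q)$ in $\langle\pi,\delta\rangle$ together with all $k$-spaces through $\delta$ meeting $\langle\pi,\delta\rangle$ in at least a $(t+1)$-space (for a $t$-space $\delta$ and $k$-space $\pi$ with $\dim(\pi\cap\delta)=t-1$) is larger than the set of all $k$-spaces meeting a fixed $(t+2)$-space in at least a $(t+1)$-space.
   Context: $\left[{n\atop k}\right]_q=\frac{(q^n-1)\cdots(q^{n-k+1}-1)}{(q^k-1)\cdots(q-1)}$ for $k>0$, $=1$ for $k=0$; $\theta_m=\frac{q^{m+1}-1}{q-1}$; $q$ is a prime power; dimensions are projective. *)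

From mathcomp Require Import all_boot all_order all_algebra.
Set Implicit Arguments. Unset Strict Implicit. Unset Printing Implicit Defensive.
Import Order.TTheory GRing.Theory Num.Theory.
Local Open Scope ring_scope.

Definition gauss (q n k : nat) : rat :=
  \prod_(i < k) (((q%:R : rat) ^+ (n - i)%N - 1) / ((q%:R : rat) ^+ i.+1 - 1)).

Definition theta (q m : nat) : rat :=
  ((q%:R : rat) ^+ m.+1 - 1) / ((q%:R : rat) - 1).

Definition prime_power (q : nat) : Prop := exists p e : nat, prime p /\ (0 < e)%N /\ q = (p ^ e)%N.

From mathcomp Require Import all_boot all_order all_algebra.
From mathcomp Require Import ring lra zify.
Set Implicit Arguments. Unset Strict Implicit. Unset Printing Implicit Defensive.
Import Order.TTheory GRing.Theory Num.Theory.
Local Open Scope ring_scope.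

(* Put j = k - t - 2 and e = n - k.  The theta terms on the left are
   nonnegative in total since theta is increasing.  Comparing the two products
   factor by factor, [e+j+2, j+2] - q^((j+3)(j+2)) [e-1, j+2] is at least
   (q^(j+3) - 1)/(q^(j+2) - 1) [e+j+2, j+1], and the growth of Gaussian binomials
   in both arguments bounds this below by q^(e+j+2) [e+j, j].  On the right,
   theta_(t+2) <= q^(j+2)/2 because q >= 3, which keeps the factor in
   parentheses below q^(e+j+2). *)

Lemma ler_prod_sub_last (R : numDomainType) (m : nat) (a c : nat -> R) :
  (forall i, (i <= m)%N -> 0 <= a i <= c i) ->
  (c m - a m) * \prod_(i < m) c i + \prod_(i < m.+1) a i <= \prod_(i < m.+1) c i.
Proof.
move=> ac; rewrite !big_ord_recr /=.
have /andP[am0 _] := ac m (leqnn m).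
have A_le_C : \prod_(i < m) a i <= \prod_(i < m) c i.
  by apply: ler_prod => i _; apply: ac; apply: ltnW.
rewrite -lerBrDl.
have -> : (\prod_(i < m) c i) * c m - (c m - a m) * \prod_(i < m) c i
          = a m * \prod_(i < m) c i by ring.
by rewrite mulrC ler_wpM2l.
Qed.

Lemma expr_subn_le_ratio (F : realFieldType) (x : F) (a b : nat) :
  1 < x -> (0 < b)%N -> (b <= a)%N -> x ^+ (a - b) <= (x ^+ a - 1) / (x ^+ b - 1).
Proof.
move=> x_gt1 b_gt0 ba.
have xb_gt1 : 1 < x ^+ b by rewrite exprn_egt1 // -lt0n.
rewrite ler_pdivlMr ?subr_gt0 // mulrBr mulr1 -exprD subnK //.
have : 1 <= x ^+ (a - b) by apply: exprn_ege1; apply: ltW.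
lra.
Qed.

Section Gauss.

Variable q : nat.
Hypothesis q_gt1 : (1 < q)%N.
Local Notation y := (q%:R : rat).

Let y_gt1 : 1 < y. Proof. by rewrite ltr1n. Qed.

Let expr_sub1_gt0 i : 0 < y ^+ i.+1 - 1.
Proof. by rewrite subr_gt0 exprn_egt1. Qed.

Let expr_sub1_ge0 i : 0 <= y ^+ i - 1.
Proof. by rewrite subr_ge0 exprn_ege1 // ltW. Qed.

Let ratio_ge0 i j : 0 <= (y ^+ i - 1) / (y ^+ j.+1 - 1).
Proof. exact: divr_ge0 (expr_sub1_ge0 i) (ltW (expr_sub1_gt0 j)). Qed.

Lemma ler_theta : {homo theta q : m n / (m <= n)%N >-> m <= n}.
Proof.
move=> m n mn; rewrite /theta ler_wpM2r ?invr_ge0 ?subr_ge0 ?(ltW y_gt1) //.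
by rewrite lerD2r ler_eXn2l.
Qed.

Lemma gauss_gt0 N m : (m <= N)%N -> 0 < gauss q N m.
Proof.
move=> mN; apply: prodr_gt0 => i _; apply: divr_gt0 => //.
by rewrite subr_gt0 exprn_egt1 // subn_eq0 -ltnNge (leq_trans (ltn_ord i)).
Qed.

Lemma gauss_absorb N m :
  gauss q N.+1 m.+1 = (y ^+ N.+1 - 1) / (y ^+ m.+1 - 1) * gauss q N m.
Proof.
rewrite /gauss !prodf_div big_ord_recl big_ord_recr /= subn0 invfM.
under eq_bigr => i _ do rewrite /bump leq0n add1n subSS.
by ring.
Qed.

Lemma gauss_absorb_ge N m : (m <= N)%N ->
  y ^+ (N - m) * gauss q N m <= gauss q N.+1 m.+1.
Proof.
move=> mN; rewrite gauss_absorb ler_wpM2r //; first exact: ltW (gauss_gt0 mN).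
by rewrite -[(N - m)%N]subSS; apply: expr_subn_le_ratio.
Qed.

Lemma gauss_top_ge N m : (m <= N)%N -> y ^+ m * gauss q N m <= gauss q N.+1 m.
Proof.
move=> mN; rewrite -[m in y ^+ m]card_ord -prodr_const -big_split /=.
apply: ler_prod => i _; rewrite mulr_ge0 ?ratio_ge0 //= mulrA.
have iN : (i <= N)%N by rewrite (leq_trans (ltnW (ltn_ord i))).
rewrite ler_wpM2r ?invr_ge0 ?(ltW (expr_sub1_gt0 _)) // subSn //.
by rewrite exprS mulrBr mulr1 lerD2l lerN2 (ltW y_gt1).
Qed.

(* [y ^+ (d * m.+1) * gauss q M m.+1] counts the (m+1)-subspaces of an
   (M+d)-dimensional vector space that meet a fixed d-subspace trivially. *)
Lemma gauss_skew_le M d m : (m <= M)%N ->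
  (y ^+ d - 1) / (y ^+ m.+1 - 1) * gauss q (M + d) m + y ^+ (d * m.+1) * gauss q M m.+1
  <= gauss q (M + d) m.+1.
Proof.
move=> mM.
pose a i := y ^+ d * ((y ^+ (M - i) - 1) / (y ^+ i.+1 - 1)).
pose c i := (y ^+ (M + d - i) - 1) / (y ^+ i.+1 - 1).
have cE i : (i <= M)%N -> c i = a i + (y ^+ d - 1) / (y ^+ i.+1 - 1).
  move=> iM; rewrite /c /a mulrA -mulrDl.
  have -> : (M + d - i = d + (M - i))%N by lia.
  by rewrite exprD; congr (_ / _); ring.
have -> : y ^+ (d * m.+1) * gauss q M m.+1 = \prod_(i < m.+1) a i.
  by rewrite big_split /= prodr_const card_ord -exprM.
have -> : (y ^+ d - 1) / (y ^+ m.+1 - 1) = c m - a m by rewrite cE // addrAC subrr add0r.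
apply: ler_prod_sub_last => i im; rewrite cE ?(leq_trans im mM) // lerDl ratio_ge0 andbT.
by rewrite mulr_ge0 ?exprn_ge0 ?ratio_ge0.
Qed.

Lemma gauss_SS_ge N m : (m <= N)%N -> y ^+ N.+1 * gauss q N m <= gauss q N.+2 m.+1.
Proof.
move=> mN; apply: le_trans (gauss_absorb_ge (leqW mN)).
rewrite -{1}(subnK (leqW mN)) exprD -mulrA ler_wpM2l ?exprn_ge0 ?gauss_top_ge //.
Qed.

End Gauss.

Lemma theta_le_half q m : (3 <= q)%N -> theta q m <= (q%:R : rat) ^+ m.+1 / 2.
Proof.
move=> q_ge3; have y_ge3 : 3 <= (q%:R : rat) by rewrite (ler_nat _ 3 q).
have : 0 <= (q%:R : rat) ^+ m.+1 by rewrite exprn_ge0.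
rewrite /theta ler_pdivrMr ?subr_gt0 ?(lt_le_trans _ y_ge3) //; nra.
Qed.

Lemma theta_factor_lt q e j m : (3 <= q)%N -> (m <= j.+1)%N ->
  1 + theta q m * (q%:R : rat) ^+ j.+1
        * (((q%:R : rat) ^+ e - 1) / ((q%:R : rat) ^+ j.+1 - 1))
  < (q%:R : rat) ^+ (e + j).+2.
Proof.
move=> q_ge3 mj; set y := (q%:R : rat).
have y_ge3 : 3 <= y by rewrite (ler_nat _ 3 q).
have y_gt1 : 1 < y by rewrite (lt_le_trans _ y_ge3).
have th_ge0 : 0 <= theta q m.
  by rewrite divr_ge0 // subr_ge0 ?exprn_ege1 ?ltW.
set x := y ^+ j.+1; set z := y ^+ e.
have x_ge3 : 3 <= x by rewrite (le_trans y_ge3) // -{1}(expr1 y) ler_eXn2l.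
have z_ge1 : 1 <= z by rewrite exprn_ege1 ?ltW.
have -> : y ^+ (e + j).+2 = y * x * z by rewrite -exprS -exprD; congr (_ ^+ _); lia.
have th_le : theta q m <= y * x / 2.
  by rewrite (le_trans (theta_le_half m q_ge3)) // ler_pM2r // -exprS ler_eXn2l.
have ratio_ge0 : 0 <= x * ((z - 1) / (x - 1)).
  by rewrite mulr_ge0 ?divr_ge0 ?subr_ge0 // (le_trans _ x_ge3).
have ratio_le : x * ((z - 1) / (x - 1)) <= 3 / 2 * (z - 1).
  by rewrite mulrA ler_pdivrMr ?subr_gt0 ?(lt_le_trans _ x_ge3) //; nra.
have := ler_pM th_ge0 ratio_ge0 th_le ratio_le.
have : 9 <= y * x by nra.
rewrite -mulrA; nra.
Qed.

Lemma gauss_meet_gt q e j m : (3 <= q)%N -> (m <= j.+1)%N -> (j.+2 <= e)%N ->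
  gauss q (e + j) j * (1 + theta q m * (q%:R : rat) ^+ j.+1
                           * (((q%:R : rat) ^+ e - 1) / ((q%:R : rat) ^+ j.+1 - 1)))
  < gauss q (e + j).+2 j.+2 - (q%:R : rat) ^+ (j.+3 * j.+2) * gauss q (e - 1) j.+2.
Proof.
move=> q_ge3 mj je; have q_gt1 : (1 < q)%N by lia.
set y := (q%:R : rat); have y_gt1 : 1 < y by rewrite ltr1n.
have G_gt0 := gauss_gt0 q_gt1 (leq_addl e j).
have je1 : (j.+1 <= e - 1)%N by lia.
have skew := gauss_skew_le q_gt1 j.+3 je1.
rewrite (_ : (e - 1 + j.+3 = (e + j).+2)%N) in skew; last lia.
have grow := gauss_SS_ge q_gt1 (leq_addl e j).
have ratio : y <= (y ^+ j.+3 - 1) / (y ^+ j.+2 - 1).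
  by have := expr_subn_le_ratio y_gt1 (ltn0Sn j.+1) (leqnSn j.+2); rewrite subSnn expr1.
have := theta_factor_lt e q_ge3 mj; rewrite -(ltr_pM2l G_gt0) => bound.
apply: (lt_le_trans bound); rewrite lerBrDr; apply: le_trans skew.
rewrite lerD2r exprS mulrCA [gauss _ _ _ * _]mulrC.
by apply: ler_pM; rewrite ?mulr_ge0 ?exprn_ge0 ?(ltW G_gt0).
Qed.

Theorem mainTheorem15 (q n k t : nat) :
  prime_power q -> (3 <= q)%N -> (2 * k - t < n)%N -> (2 * t + 2 < k)%N ->
  theta q k.+1 - theta q (k - t) + gauss q (n - t) (k - t)
    - (q%:R : rat) ^+ ((k - t + 1) * (k - t)) * gauss q (n - k - 1) (k - t)
  > gauss q (n - t - 2) (k - t - 2)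
    * (1 + theta q (t + 2) * (q%:R : rat) ^+ (k - t - 1)
           * (((q%:R : rat) ^+ (n - k) - 1) / ((q%:R : rat) ^+ (k - t - 1) - 1))).
Proof.
move=> _ q_ge3 n_gt k_gt.
set j := (k - t - 2)%N; set e := (n - k)%N.
have -> : (k - t - 1 = j.+1)%N by lia.
have -> : (k - t + 1 = j.+3)%N by lia.
have -> : (k - t = j.+2)%N by lia.
have -> : (n - t - 2 = e + j)%N by lia.
have -> : (n - t = (e + j).+2)%N by lia.
have q_gt1 : (1 < q)%N by lia.
have tj : (t + 2 <= j.+1)%N by lia.
have je : (j.+2 <= e)%N by lia.
have jk : (j.+2 <= k.+1)%N by lia.
have := gauss_meet_gt q_ge3 tj je.
have := ler_theta q_gt1 jk.
lra.
Qed.
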